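(* Let $r>0$ and $x,y\in\mathbb{R}^2$ with $d:=\|x-y\|>r$. Let $p_1,p_2$ be the two intersection points of the circles $\partial B(x,r)$ and $\partial B(y,d)$. Then $W(x,y;r)=B(p_1,r)\cap B(p_2,r)$.
   Context: $B(z,\rho)=\{w\in\mathbb{R}^2:\|z-w\|\le\rho\}$ is the closed Euclidean ball. For $x,y\in\mathbb{R}^2$ and $r>0$, $W(x,y;r):=\{z\in\mathbb{R}^2: B(z,r)\supseteq B(x,r)\cap B(y,\|x-y\|)\}$. *)

From Stdlib Require Import Reals.
Open Scope R_scope.

Definition pt := (R * R)%type.

Definition dist2 (z w : pt) : R :=
  sqrt ((fst z - fst w) ^ 2 + (snd z - snd w) ^ 2).

Definition ball (z : pt) (rho : R) (w : pt) : Prop := dist2 z w <= rho.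

Definition Wset (x y : pt) (r : R) (z : pt) : Prop :=
  forall w : pt, ball x r w /\ ball y (dist2 x y) w -> ball z r w.

From Stdlib Require Import Reals Lra Psatz.
Open Scope R_scope.

(* The inclusion "⊆" is immediate: p1 and p2 lie in the lens
   L = B(x,r) ∩ B(y,d), so every z ∈ W reaches them within r.

   For "⊇" we move to the orthonormal frame with origin x whose first axis
   points to y ([frame], an isometry).  There x = (0,0), y = (d,0), and the
   two circle intersection points are forced to be p1 = (a,b), p2 = (a,-b)
   with a = r²/(2d), a² + b² = r² ([circle_intersection]).  For z = (s,t)
   in B(p1,r) ∩ B(p2,r) and w = (u,v) in L we have |v| ≤ |b| ([lens_strip]),
   hence |z|² ≤ 2as + 2tv ([affine_nonneg_on_segment]); expanding
   |z - w|² = |z|² - 2(su + tv) + |w|² and bounding |w|² by r² (if u ≥ a)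
   or by 2du (if u < a) yields |z - w| ≤ r ([lens_reach]). *)

Definition sqdist (z w : pt) : R := (fst z - fst w) ^ 2 + (snd z - snd w) ^ 2.

Lemma sqdist_nonneg (z w : pt) : 0 <= sqdist z w.
Proof. unfold sqdist; apply Rplus_le_le_0_compat; apply pow2_ge_0. Qed.

Lemma dist2_sqdist (z w : pt) : dist2 z w = sqrt (sqdist z w).
Proof. reflexivity. Qed.

Lemma dist2_sym (z w : pt) : dist2 z w = dist2 w z.
Proof. unfold dist2; f_equal; ring. Qed.

Lemma ball_sqdist (z w : pt) (rho : R) :
  0 <= rho -> ball z rho w <-> sqdist z w <= rho ^ 2.
Proof.
  intros hrho; unfold ball; rewrite dist2_sqdist; split; intro h.
  - rewrite <- (sqrt_sqrt (sqdist z w)) by apply sqdist_nonneg.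
    pose proof (sqrt_pos (sqdist z w)); nra.
  - rewrite <- (sqrt_pow2 rho hrho); apply sqrt_le_1_alt; exact h.
Qed.

Lemma dist2_eq_sqdist (z w : pt) (rho : R) :
  dist2 z w = rho -> sqdist z w = rho ^ 2.
Proof.
  rewrite dist2_sqdist; intros <-.
  rewrite pow2_sqrt; [reflexivity | apply sqdist_nonneg].
Qed.

Lemma sqdist_eq0 (z w : pt) : sqdist z w = 0 -> z = w.
Proof.
  destruct z as [z1 z2], w as [w1 w2]; unfold sqdist; simpl; intro h.
  pose proof (pow2_ge_0 (z1 - w1)); pose proof (pow2_ge_0 (z2 - w2)).
  destruct (Req_dec z1 w1) as [e1 | n1];
    [destruct (Req_dec z2 w2) as [e2 | n2]; [subst; reflexivity |] |].
  - exfalso; apply (pow_nonzero (z2 - w2) 2); lra.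
  - exfalso; apply (pow_nonzero (z1 - w1) 2); lra.
Qed.

(* Coordinates of v in the orthonormal frame with origin x and first axis
   along y - x: ((v - x)·(y - x) / d, (y - x) × (v - x) / d). *)
Definition frame (x y v : pt) : pt :=
  let d := dist2 x y in
  (((fst v - fst x) * (fst y - fst x) + (snd v - snd x) * (snd y - snd x)) / d,
   ((snd v - snd x) * (fst y - fst x) - (fst v - fst x) * (snd y - snd x)) / d).

Section Frame.
Variables x y : pt.
Hypothesis x_neq_y : 0 < dist2 x y.

(* The frame change is an isometry, by Lagrange's identity
   (D·Y)² + (Y × D)² = |D|² |Y|². *)
Lemma frame_sqdist (v w : pt) : sqdist (frame x y v) (frame x y w) = sqdist v w.
Proof.
  assert (hd : sqdist x y = dist2 x y ^ 2) by (apply dist2_eq_sqdist; reflexivity).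
  transitivity (sqdist v w * sqdist x y / dist2 x y ^ 2).
  - unfold frame, sqdist; simpl; field; lra.
  - rewrite hd; field; lra.
Qed.

Lemma frame_ball (v w : pt) (rho : R) :
  ball (frame x y v) rho (frame x y w) <-> ball v rho w.
Proof. unfold ball; rewrite !dist2_sqdist, frame_sqdist; reflexivity. Qed.

Lemma frame_dist2 (v w : pt) : dist2 (frame x y v) (frame x y w) = dist2 v w.
Proof. rewrite !dist2_sqdist, frame_sqdist; reflexivity. Qed.

Lemma frame_injective (v w : pt) : v <> w -> frame x y v <> frame x y w.
Proof.
  intros hvw e; apply hvw, sqdist_eq0.
  rewrite <- frame_sqdist, e; unfold sqdist; ring.
Qed.

Lemma frame_origin : frame x y x = (0, 0).
Proof. unfold frame; simpl; f_equal; field; lra. Qed.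

Lemma frame_target : frame x y y = (dist2 x y, 0).
Proof.
  assert (hd : sqdist x y = dist2 x y ^ 2) by (apply dist2_eq_sqdist; reflexivity).
  unfold frame; simpl; f_equal; [| field; lra].
  transitivity (sqdist x y / dist2 x y).
  - unfold sqdist; field; lra.
  - rewrite hd; field; lra.
Qed.

End Frame.

Lemma circle_intersection (d r : R) (q1 q2 : pt) :
  d <> 0 -> q1 <> q2 ->
  sqdist (0, 0) q1 = r ^ 2 -> sqdist (d, 0) q1 = d ^ 2 ->
  sqdist (0, 0) q2 = r ^ 2 -> sqdist (d, 0) q2 = d ^ 2 ->
  q1 = (r ^ 2 / (2 * d), snd q1) /\ q2 = (r ^ 2 / (2 * d), - snd q1).
Proof.
  destruct q1 as [a1 b1], q2 as [a2 b2]; unfold sqdist; simpl.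
  intros hd hne h1 k1 h2 k2.
  assert (ha1 : a1 = r ^ 2 / (2 * d)) by (field_simplify_eq; nra).
  assert (ha2 : a2 = r ^ 2 / (2 * d)) by (field_simplify_eq; nra).
  assert (hb : (b2 - b1) * (b2 + b1) = 0) by nra.
  destruct (Rmult_integral _ _ hb) as [e | e].
  - exfalso; apply hne; f_equal; lra.
  - split; f_equal; lra.
Qed.

Lemma affine_nonneg_on_segment (X c b v : R) :
  v ^ 2 <= b ^ 2 -> 0 <= X + c * b -> 0 <= X - c * b -> 0 <= X + c * v.
Proof.
  intros hv hp hm.
  destruct (Rle_dec 0 b) as [hb | hb].
  - assert (hvb : - b <= v <= b) by (split; nra). nra.
  - assert (hvb : b <= v <= - b) by (split; nra). nra.
Qed.

Lemma lens_strip (a b d r u v : R) :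
  0 < r < d -> 2 * a * d = r ^ 2 -> a ^ 2 + b ^ 2 = r ^ 2 ->
  u ^ 2 + v ^ 2 <= r ^ 2 -> (u - d) ^ 2 + v ^ 2 <= d ^ 2 ->
  v ^ 2 <= b ^ 2.
Proof.
  intros [hr hrd] had hab hw1 hw2.
  assert (ha : 0 < a < d) by (split; nra).
  destruct (Rle_dec a u); nra.
Qed.

Lemma lens_reach (a b d r : R) (z w : pt) :
  0 < r < d -> 2 * a * d = r ^ 2 -> a ^ 2 + b ^ 2 = r ^ 2 ->
  sqdist (a, b) z <= r ^ 2 -> sqdist (a, - b) z <= r ^ 2 ->
  sqdist (0, 0) w <= r ^ 2 -> sqdist (d, 0) w <= d ^ 2 ->
  sqdist z w <= r ^ 2.
Proof.
  destruct z as [s t], w as [u v]; unfold sqdist; simpl.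
  intros hrd had hab hz1 hz2 hw1 hw2.
  assert (ha : 0 < a /\ 2 * a < d) by (destruct hrd; split; nra).
  assert (hv : v ^ 2 <= b ^ 2).
  { apply (lens_strip a b d r u v); trivial; nra. }
  assert (hzb1 : s ^ 2 + t ^ 2 <= 2 * a * s + 2 * t * b) by nra.
  assert (hzb2 : s ^ 2 + t ^ 2 <= 2 * a * s - 2 * t * b) by nra.
  assert (hzv : s ^ 2 + t ^ 2 <= 2 * a * s + 2 * t * v).
  { pose proof (affine_nonneg_on_segment (2 * a * s - (s ^ 2 + t ^ 2)) (2 * t) b v hv).
    lra. }
  assert (hs : 0 <= s <= 2 * a) by (split; nra).
  destruct (Rle_dec a u).
  - (* |w|² ≤ r² and s (a - u) ≤ 0 *)
    nra.
  - (* |w|² ≤ 2du and (a - u)(d - s) ≥ 0 *)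
    assert (0 <= (a - u) * (d - s)) by (apply Rmult_le_pos; lra).
    nra.
Qed.

Lemma normalized_inclusion (d r : R) (q1 q2 z w : pt) :
  0 < r < d -> q1 <> q2 ->
  dist2 (0, 0) q1 = r -> dist2 (d, 0) q1 = d ->
  dist2 (0, 0) q2 = r -> dist2 (d, 0) q2 = d ->
  ball q1 r z -> ball q2 r z -> ball (0, 0) r w -> ball (d, 0) d w ->
  ball z r w.
Proof.
  intros hrd hne h1 k1 h2 k2 hz1 hz2 hw1 hw2.
  assert (hr : 0 <= r) by lra; assert (hd : 0 <= d) by lra.
  apply ball_sqdist in hz1, hz2, hw1; trivial.
  apply ball_sqdist in hw2; trivial.
  apply ball_sqdist; trivial.
  destruct (circle_intersection d r q1 q2) as [E1 E2];
    try apply dist2_eq_sqdist; trivial; try lra.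
  pose proof (dist2_eq_sqdist _ _ _ h1) as hq1.
  rewrite E1 in hz1, hq1; rewrite E2 in hz2.
  apply (lens_reach (r ^ 2 / (2 * d)) (snd q1) d r); trivial.
  - field; lra.
  - unfold sqdist in hq1; simpl in hq1; lra.
Qed.

Theorem mainTheorem10 (r : R) (x y p1 p2 : pt) :
  0 < r -> r < dist2 x y ->
  p1 <> p2 ->
  dist2 x p1 = r -> dist2 y p1 = dist2 x y ->
  dist2 x p2 = r -> dist2 y p2 = dist2 x y ->
  forall z : pt, Wset x y r z <-> (ball p1 r z /\ ball p2 r z).
Proof.
  intros hr hrd hne h1 k1 h2 k2 z; split.
  - (* p1, p2 belong to the lens B(x,r) ∩ B(y,d) *)
    intros hW; unfold ball; rewrite !(dist2_sym _ z).
    split; apply hW; unfold ball; lra.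
  - intros [hz1 hz2] w [hw1 hw2].
    assert (hd : 0 < dist2 x y) by lra.
    apply (frame_ball x y hd).
    apply (normalized_inclusion (dist2 x y) r (frame x y p1) (frame x y p2));
      rewrite <- ?(frame_origin x y hd), <- ?(frame_target x y hd),
        ?(frame_dist2 x y hd), ?(frame_ball x y hd);
      auto using frame_injective.
Qed.
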